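(* Let $k$ be an algebraically closed field of characteristic zero and let $X\subset\mathbb P^n$ be a chain of closed subvarieties $X_1,\dots,X_\ell$ with saturated ideal $I_X=\bigcap_i I_{X_i}\subset k[x_0,\dots,x_n]$, such that for some integers $n_0=0<n_1<\cdots<n_\ell=n$ one has $X_i\subset\{x_0=\cdots=x_{n_{i-1}-1}=0,\ x_{n_i+1}=\cdots=x_n=0\}$ for all $i$. Let $\rho:\mathbb G_m\to\mathrm{GL}_{n+1}$ be a one-parameter subgroup diagonalized by $x_0,\dots,x_n$ with weights $(r_0,\dots,r_n)$, and let $\rho_i$ be the restriction of $\rho$ to $\mathrm{GL}(kx_{n_{i-1}}+\cdots+kx_{n_i})$. Regard $X_i$ as the subvariety of $\mathbb P^{n_i-n_{i-1}}$ defined by $I_{X_i}\cap k[x_{n_{i-1}},\dots,x_{n_i}]$. Let $P(m)$ be the Hilbert polynomial of $I_X$ and $P_i(m)$ the Hilbert polynomial of $I_{X_i}\cap k[x_{n_{i-1}},\dots,x_{n_i}]$ as an ideal of $k[x_{n_{i-1}},\dots,x_{n_i}]$. Then for $m$ as below, \[ \mu([X]_m^\star,\rho)=\sum_{i=1}^\ell\mu([X_i]_m^\star,\rho_i)-\sum_{i=1}^\ell\frac{mP_i(m)}{n_i-n_{i-1}+1}\sum_{k=n_{i-1}}^{n_i}r_k+\frac{mP(m)}{n+1}\sum_{i=0}^n r_i+m\sum_{i=1}^{\ell-1}r_{n_i}. \]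
   Context: A chain of subvarieties means $X=\bigcup_iX_i$ and $X_i\cap X_j\neq\emptyset$ iff $|i-j|=1$. Here $m$ is a positive integer at least the Castelnuovo–Mumford regularity of all ideals involved, so that Hilbert points are defined and the dimension of the degree-$m$ part of each quotient ring equals the value of its Hilbert polynomial at $m$. For a homogeneous ideal $J\subset k[y_0,\dots,y_N]$ defining $Y\subset\mathbb P^N$ with Hilbert polynomial $P_Y$, and a one-parameter subgroup $\rho$ diagonal in $y_0,\dots,y_N$ with weights $(r_0,\dots,r_N)$, the Hilbert–Mumford index of the $m$th dual Hilbert point $[Y]_m^\star=[S_m\to S_m/J_m]$ is given by $\mu([Y]_m^\star,\rho)=-\sum_{x^\alpha}\mathrm{wt}_\rho(x^\alpha)+\frac{mP_Y(m)}{N+1}\sum_{i=0}^N r_i$, the sum over degree-$m$ monomials $x^\alpha$ not in $\mathrm{in}_{\prec_\rho}(J)$, where $\mathrm{wt}_\rho(x^\alpha)=\sum\alpha_i r_i$ and $\prec_\rho$ is the $\rho$-weighted order (monomials compared first by $\rho$-weight, ties broken by a fixed monomial order), used consistently for all ideals and restricted to the relevant subrings. *)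

From HB Require Import structures.
From mathcomp Require Import all_boot all_order all_algebra.
From mathcomp Require Import mpoly.
From Stdlib Require Import ClassicalEpsilon.

Set Implicit Arguments.
Unset Strict Implicit.
Unset Printing Implicit Defensive.

Import Order.TTheory GRing.Theory Num.Theory.
Local Open Scope ring_scope.

Definition bP (Q : Prop) : bool :=
  if excluded_middle_informative Q then true else false.

Section Defs.
Variable (k : fieldType) (N : nat).
Local Notation S := {mpoly k[N]}.
Local Notation mon := 'X_{1..N}.
Local Notation vec := ('I_N -> k).

(* A point of P^{N-1} is represented by a nonzero vector of k^N;
   a subset of P^{N-1} by a predicate on vectors (a cone). *)
Definition nonzero_vec (v : vec) : Prop := exists i, v i != 0.

Definition homogeneous (d : nat) (f : S) : bool :=
  all (fun a : mon => mdeg a == d) (msupp f).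

Definition is_homogeneous (f : S) : Prop := exists d, homogeneous d f.

Definition proj_zero (F : S -> Prop) (v : vec) : Prop :=
  nonzero_vec v /\ forall f, F f -> f.@[v] = 0.

Definition proj_closed (X : vec -> Prop) : Prop :=
  exists F : S -> Prop, (forall f, F f -> is_homogeneous f) /\
    forall v, X v <-> proj_zero F v.

Definition proj_variety (X : vec -> Prop) : Prop :=
  [/\ proj_closed X, exists v, X v &
      forall Y Z, proj_closed Y -> proj_closed Z ->
        (forall v, X v <-> Y v \/ Z v) ->
        (forall v, X v -> Y v) \/ (forall v, X v -> Z v)].

Definition vanishing_ideal (X : vec -> Prop) (f : S) : Prop :=
  forall v, X v -> f.@[v] = 0.

Definition supported (B : pred 'I_N) (a : mon) : bool :=
  [forall i, (a i != 0)%N ==> B i].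

Definition in_subring (B : pred 'I_N) (f : S) : bool :=
  all (supported B) (msupp f).

(* Hilbert function of an ideal J of S_B = k[x_j : j in B]:
   hilb_fun B J d c  <->  dim_k (S_B / J)_d = c, i.e. c is the maximal
   size of a family of degree-d elements of S_B linearly independent
   modulo J. *)
Definition lin_indep_mod (B : pred 'I_N) (J : S -> Prop) (d c : nat) :=
  exists fs : 'I_c -> S,
    (forall i, in_subring B (fs i) /\ homogeneous d (fs i)) /\
    forall cs : 'I_c -> k, J (\sum_i cs i *: fs i) -> forall i, cs i = 0.

Definition hilb_fun (B : pred 'I_N) (J : S -> Prop) (d c : nat) : Prop :=
  lin_indep_mod B J d c /\ ~ lin_indep_mod B J d c.+1.

Definition is_hilb_poly (B : pred 'I_N) (J : S -> Prop) (P : {poly rat}) :=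
  exists d0, forall d, (d0 <= d)%N ->
    exists c, hilb_fun B J d c /\ P.[d%:R] = c%:R.

Definition monomial_order (le : rel mon) : Prop :=
  [/\ reflexive le, antisymmetric le, transitive le, total le &
      (forall a b c : mon, le a b -> le (a + c)%MM (b + c)%MM)] /\
      (forall a : mon, le 0%MM a).

Definition wt (r : 'I_N -> int) (a : mon) : int := \sum_i ((a i)%:Z * r i).

Definition wle (le : rel mon) (r : 'I_N -> int) (a b : mon) : bool :=
  (wt r a < wt r b) || ((wt r a == wt r b) && le a b).

Definition is_lead (le : rel mon) r (f : S) (a : mon) : Prop :=
  a \in msupp f /\ forall b, b \in msupp f -> wle le r b a.

Definition mdivides (b a : mon) : bool := [forall i, (b i <= a i)%N].

Definition in_initial (le : rel mon) r (J : S -> Prop) (a : mon) : Prop :=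
  exists f b, [/\ J f, f != 0, is_lead le r f b & mdivides b a].

(* Hilbert-Mumford index of the m-th dual Hilbert point of the ideal J of
   S_B = k[x_j : j in B], for the one-parameter subgroup of GL(S_B_1)
   with weights (r_j)_{j in B}, P the Hilbert polynomial of J:
   mu = - sum_{x^a deg m in S_B, x^a notin in(J)} wt(x^a)
        + m P(m) / #|B| * sum_{j in B} r_j. *)
Definition hm_index (le : rel mon) (r : 'I_N -> int) (B : pred 'I_N)
    (J : S -> Prop) (P : {poly rat}) (m : nat) : rat :=
  - (\sum_(a : 'X_{1..N < m.+1} |
           [&& mdeg a == m, supported B a & ~~ bP (in_initial le r J a)])
       (wt r a)%:~R)
  + (m%:R * P.[m%:R] / (#|B|)%:R) * (\sum_(j | B j) (r j)%:~R).

End Defs.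

Definition block (n : nat) (nn : nat -> nat) (i : nat) : pred 'I_n.+1 :=
  fun j => (nn i.-1 <= j <= nn i)%N.

From HB Require Import structures.
From mathcomp Require Import all_boot all_order all_algebra.
From mathcomp Require Import mpoly.
From mathcomp Require Import zify ring.
From Stdlib Require Import ClassicalEpsilon.
Import Order.TTheory GRing.Theory Num.Theory.

(* Up to the correction terms of the formula, each Hilbert-Mumford index is minus
   the total rho-weight of the standard monomials of degree m, so the identity
   compares the standard monomials of I_X with those of the I_{X_i}, counted with
   multiplicity over i.
   A monomial is standard for I_{X_i} iff it lies in the block subring
   k[x_{n_{i-1}}, ..., x_{n_i}] and is standard for I_X: the block-supported part
   of an element of I_X lies in I_{X_i}, and I_{X_i} is contained in I_X because
   the restriction to block i of a point of X_j is a multiple of a point of X_i.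
   A monomial supported in no single block vanishes on X, so every standard
   monomial of I_X lies in some block subring; it lies in two of them exactly when
   it is x_{n_i}^m with 0 < i < ell. These powers are standard, because
   X_i \cap X_{i+1} is the coordinate point of x_{n_i}, and they produce the last
   term m \sum r_{n_i}. Separating homogeneous components of polynomials vanishing
   on cones uses that k is infinite (char 0). *)

Set Implicit Arguments.
Unset Strict Implicit.
Unset Printing Implicit Defensive.
Local Open Scope ring_scope.

Lemma bPP (Q : Prop) : reflect Q (bP Q).
Proof. by rewrite /bP; case: excluded_middle_informative => ?; constructor. Qed.

Lemma sumr_const_seq (V : nmodType) (I : Type) (s : seq I) (P : pred I) (x : V) :
  \sum_(i <- s | P i) x = x *+ count P s.
Proof. by rewrite big_const_seq; elim: (count P s) => //= c ->; rewrite mulrS. Qed.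

Section Cones.
Variables (k : fieldType) (N : nat).
Implicit Types (f : {mpoly k[N]}) (u : 'I_N -> k) (X : ('I_N -> k) -> Prop).

Lemma supported_pred1_power (a : 'X_{1..N}) (c : 'I_N) :
  supported (pred1 c) a -> a = (U_(c) *+ mdeg a)%MM.
Proof.
move=> /forallP a_c.
have a0 t : t != c -> a t = 0%N.
  by move=> tc; apply/eqP; apply: contraNT tc => /(implyP (a_c t)).
apply/mnmP => t; rewrite mulmnE mnm1E eq_sym.
case: eqP => [->|/eqP /a0 -> //]; rewrite mul1n mdegE (bigD1 c) //= big1 ?addn0 //.
Qed.

Lemma meval_scale f u c :
  f.@[fun t => c * u t] =
  \sum_(a <- msupp f) f@_a * \prod_i u i ^+ a i * c ^+ mdeg a.
Proof.
rewrite mevalE; apply: eq_bigr => a _; rewrite -mulrA; congr (_ * _).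
under eq_bigr do rewrite exprMn.
by rewrite big_split /= prodrXr mdegE mulrC.
Qed.

Lemma meval_scale_homog f u c d : homogeneous d f ->
  f.@[fun t => c * u t] = c ^+ d * f.@[u].
Proof.
move=> /allP fd; rewrite meval_scale mevalE mulr_sumr.
by apply: eq_big_seq => a /fd /eqP ->; rewrite mulrC.
Qed.

Lemma proj_closed_scale X u c : proj_closed X -> X u -> c != 0 ->
  X (fun t => c * u t).
Proof.
move=> [F [Fhomog XE]] /XE [[i ui] Fu] c0; apply/XE; split.
  by exists i; rewrite mulf_neq0.
move=> f Ff; have [d fd] := Fhomog f Ff.
by rewrite (meval_scale_homog _ _ fd) Fu ?mulr0.
Qed.

Lemma proj_closed_nonzero X u : proj_closed X -> X u -> exists t, u t != 0.
Proof. by move=> [F [_ XE]] /XE []. Qed.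

Lemma meval_subring (B : pred 'I_N) f u u' : in_subring B f ->
  {in B, u =1 u'} -> f.@[u] = f.@[u'].
Proof.
move=> /allP fB uu'; rewrite !mevalE; apply: eq_big_seq => a /fB /forallP aB.
congr (_ * _); apply: eq_bigr => t _.
case: (boolP (B t)) => [/uu' -> //|tB].
by move: (aB t); rewrite (negbTE tB) implybF negbK => /eqP ->; rewrite !expr0.
Qed.

Lemma prodX_unsupported_eq0 (B : pred 'I_N) u (a : 'X_{1..N}) :
  {in [predC B], forall t, u t = 0} -> ~~ supported B a ->
  \prod_t u t ^+ a t = 0.
Proof.
move=> u0 /forallPn [t]; rewrite negb_imply => /andP [at0 tB].
by apply/eqP/prodf_eq0; exists t => //; rewrite u0 ?expr0n ?(negbTE at0).
Qed.

Hypothesis k_char0 : [pchar k] =i pred0.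

Lemma natr_inj_char0 : injective (fun i : nat => i%:R : k).
Proof.
have natr_eq0 := (pcharf0P k).1 k_char0.
suff le_inj i j : (i <= j)%N -> i%:R = j%:R :> k -> i = j.
  by move=> i j; case: (leqP i j) => [|/ltnW] /le_inj // inj /esym /inj.
move=> /subnK <-; rewrite natrD -{1}(add0r i%:R) => /addIr /esym /eqP.
by rewrite natr_eq0 => /eqP ->.
Qed.

(* The map c |-> f(c u) is a polynomial in c whose d-th coefficient is the
   value at u of the degree-d part of f; char 0 gives it infinitely many roots. *)
Lemma homog_part_eval_eq0 f u :
  (forall c, c != 0 -> f.@[fun t => c * u t] = 0) ->
  forall d, \sum_(a <- msupp f | mdeg a == d) f@_a * \prod_i u i ^+ a i = 0.
Proof.
move=> fu0 d.
pose p : {poly k} :=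
  \sum_(a <- msupp f) (f@_a * \prod_i u i ^+ a i) *: 'X^(mdeg a).
have pE c : p.[c] = f.@[fun t => c * u t].
  by rewrite meval_scale horner_sum; apply: eq_bigr => a _; rewrite hornerZ hornerXn.
have p0 : p = 0.
  pose rs := [seq i.+1%:R : k | i <- iota 0 (size p)].
  apply: (roots_geq_poly_eq0 (rs := rs)).
  - apply/allP => x /mapP [i _ ->]; rewrite /root pE fu0 //.
    by rewrite ((pcharf0P k).1 k_char0).
  - by rewrite map_inj_uniq ?iota_uniq // => i j /natr_inj_char0 [].
  - by rewrite size_map size_iota.
have := congr1 (fun q : {poly k} => q`_d) p0.
by rewrite coef0 coef_sumMXn; under eq_bigl do rewrite andTb.
Qed.

Lemma vanishing_ideal_scale X f u c : proj_closed X -> X u ->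
  vanishing_ideal X f -> f.@[fun t => c * u t] = 0.
Proof.
move=> Xclosed Xu fX.
have fu0 c' : c' != 0 -> f.@[fun t => c' * u t] = 0.
  by move=> c0; apply: fX; apply: proj_closed_scale.
have [->|c0] := eqVneq c 0; last exact: fu0.
apply: etrans _ (homog_part_eval_eq0 fu0 0).
rewrite meval_scale [RHS]big_mkcond /=; apply: eq_bigr => a _; rewrite expr0n.
by case: (mdeg a == 0%N); rewrite ?mulr1 ?mulr0.
Qed.

Lemma mcoeff_coordinate_power_eq0 X f u (c : 'I_N) d :
  proj_closed X -> X u -> (forall t, t != c -> u t = 0) ->
  vanishing_ideal X f -> f@_(U_(c) *+ d) = 0.
Proof.
move=> Xclosed Xu u_supp fX; set b := (U_(c) *+ d)%MM.
have bE t : b t = if t == c then d else 0%N.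
  by rewrite mulmnE mnm1E eq_sym; case: eqP; rewrite ?mul1n.
have mdeg_b : mdeg b = d by rewrite mdegMn mdeg1 mul1n.
have uc0 : u c != 0.
  have [t ut0] := proj_closed_nonzero Xclosed Xu.
  by case: (eqVneq t c) ut0 => [<- //|/u_supp ->]; rewrite eqxx.
have prod_b : \prod_i u i ^+ b i = u c ^+ d.
  rewrite (bigD1 c) //= big1 ?mulr1 => [|t /negbTE tc]; by rewrite bE ?eqxx ?tc.
have prod_a a : mdeg a = d -> a != b -> \prod_i u i ^+ a i = 0.
  move=> mdeg_a ab; apply: (prodX_unsupported_eq0 (B := pred1 c)).
    by move=> t; rewrite !inE => /u_supp.
  by apply: contra ab => /supported_pred1_power ->; rewrite mdeg_a.
have [bf|] := boolP (b \in msupp f); last by rewrite mcoeff_msupp negbK => /eqP.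
have := homog_part_eval_eq0 (fun c' c'0 => fX _ (proj_closed_scale Xclosed Xu c'0)) d.
rewrite big_mkcond (bigD1_seq b) ?msupp_uniq //= mdeg_b eqxx [X in _ + X]big1 ?addr0.
  by rewrite prod_b => /eqP; rewrite mulf_eq0 expf_eq0 (negbTE uc0) andbF orbF => /eqP.
by move=> a ab; case: eqP => // /prod_a ->; rewrite ?mulr0.
Qed.

End Cones.

Section Breakpoints.
Variables (ell : nat) (nn : nat -> nat).
Hypothesis nn_incr : forall i, (i < ell)%N -> (nn i < nn i.+1)%N.

Lemma nn_ltn i j : (i < j)%N -> (j <= ell)%N -> (nn i < nn j)%N.
Proof.
elim: j => // j IHj; rewrite ltnS leq_eqVlt => /predU1P [-> | ij] jell.
  exact: nn_incr.
exact: ltn_trans (IHj ij (ltnW jell)) (nn_incr jell).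
Qed.

Lemma leq_nn i j : (i <= ell)%N -> (j <= ell)%N -> (nn i <= nn j)%N = (i <= j)%N.
Proof.
move=> iell jell; case: (ltngtP i j) => [ij|ji|->]; last exact: leqnn.
  exact: ltnW (nn_ltn ij jell).
by apply/negbTE; rewrite -ltnNge nn_ltn.
Qed.

Lemma block_meet_lt i j t : (i < j)%N -> (j <= ell)%N ->
  (nn i.-1 <= t <= nn i)%N -> (nn j.-1 <= t <= nn j)%N -> j = i.+1 /\ t = nn i.
Proof.
move=> ij jell /andP [_ t_le] /andP [le_t _].
have jE : j = i.+1.
  have ji : (j.-1 <= i)%N.
    rewrite -(leq_nn (leq_trans (leq_pred j) jell) (ltnW (leq_trans ij jell))).
    exact: leq_trans le_t t_le.
  by apply/eqP; rewrite eqn_leq ij andbT -(prednK (leq_ltn_trans (leq0n i) ij)) ltnS.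
by move: le_t; rewrite jE => le_t; split=> //; apply/eqP; rewrite eqn_leq t_le.
Qed.

Lemma block_meet i j t : (i <= ell)%N -> (j <= ell)%N -> i != j ->
  (nn i.-1 <= t <= nn i)%N -> (nn j.-1 <= t <= nn j)%N ->
  (j = i.+1 /\ t = nn i) \/ (i = j.+1 /\ t = nn j).
Proof.
move=> iell jell; case: (ltngtP i j) => // ij _ ti tj.
  by left; apply: block_meet_lt.
by right; apply: block_meet_lt.
Qed.

Lemma block_meet_uniq i j t t' : (i <= ell)%N -> (j <= ell)%N ->
  i != j -> (nn i.-1 <= t <= nn i)%N -> (nn j.-1 <= t <= nn j)%N ->
  (nn i.-1 <= t' <= nn i)%N -> (nn j.-1 <= t' <= nn j)%N -> t = t'.
Proof.
move=> iell jell ij ti tj t'i t'j.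
by case: (block_meet iell jell ij ti tj) => [[e1 e2]|[e1 e2]];
  case: (block_meet iell jell ij t'i t'j) => [[e3 e4]|[e3 e4]]; lia.
Qed.

End Breakpoints.

Section Chain.
Variables (k : fieldType) (n ell : nat) (nn : nat -> nat).
Variable X : nat -> ('I_n.+1 -> k) -> Prop.
Hypothesis k_char0 : [pchar k] =i pred0.
Hypothesis nn_incr : forall i, (i < ell)%N -> (nn i < nn i.+1)%N.
Hypothesis X_closed : forall i, (1 <= i <= ell)%N -> proj_closed (X i).
Hypothesis X_nonempty : forall i, (1 <= i <= ell)%N -> exists v, X i v.
Hypothesis X_supp : forall i, (1 <= i <= ell)%N -> forall v, X i v ->
  forall j : 'I_n.+1, (j < nn i.-1)%N || (nn i < j)%N -> v j = 0.
Hypothesis X_chain : forall i j, (1 <= i <= ell)%N -> (1 <= j <= ell)%N -> i != j ->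
  ((exists v, X i v /\ X j v) <-> (i == j.+1) || (j == i.+1)).

Definition chain_ideal (f : {mpoly k[n.+1]}) : Prop :=
  forall i, (1 <= i <= ell)%N -> vanishing_ideal (X i) f.

Definition block_ideal i (f : {mpoly k[n.+1]}) : Prop :=
  in_subring (block nn i) f /\ vanishing_ideal (X i) f.

Lemma X_supp_block i v t : (1 <= i <= ell)%N -> X i v -> v t != 0 ->
  (nn i.-1 <= t <= nn i)%N.
Proof.
move=> iell Xv; apply: contraNT; rewrite negb_and -!ltnNge => t_out.
by rewrite (X_supp iell Xv t_out).
Qed.

Lemma X_zero_off_block i v : (1 <= i <= ell)%N -> X i v ->
  {in [predC block nn i], forall t, v t = 0}.
Proof.
move=> iell Xv t; rewrite inE => t_out; apply/eqP; apply: contraNT t_out.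
exact: X_supp_block.
Qed.

(* For adjacent i and j, the restriction of v and the point of X_i \cap X_j are
   both supported on the single coordinate shared by the two blocks. *)
Lemma restrict_block_multiple i j v : (1 <= i <= ell)%N -> (1 <= j <= ell)%N ->
  i != j -> X j v -> exists u c, X i u /\ {in block nn i, forall t, v t = c * u t}.
Proof.
move=> iell jell ij Xv; have [[_ ile] [_ jle]] := (andP iell, andP jell).
have Xv_meet (t : 'I_n.+1) : (nn i.-1 <= t <= nn i)%N -> v t != 0 ->
    (nn j.-1 <= t <= nn j)%N /\ (i == j.+1) || (j == i.+1).
  move=> ti vt; have tj := X_supp_block jell Xv vt; split=> //.
  by case: (block_meet nn_incr ile jle ij ti tj) => [] [->]; rewrite eqxx ?orbT.
have [adj|nadj] := boolP ((i == j.+1) || (j == i.+1)); last first.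
  have [u0 Xu0] := X_nonempty iell.
  exists u0, 0; split=> // t ti; rewrite mul0r; apply/eqP.
  by apply: contraNT nadj => /(Xv_meet t ti) [].
have [v0 [Xiv0 Xjv0]] := (X_chain iell jell ij).2 adj.
have [c v0c] := proj_closed_nonzero (X_closed iell) Xiv0.
have ci := X_supp_block iell Xiv0 v0c; have cj := X_supp_block jell Xjv0 v0c.
have only_c w (t : 'I_n.+1) : X j w -> (nn i.-1 <= t <= nn i)%N -> t != c -> w t = 0.
  move=> Xw ti; apply: contraNeq => wt; apply/eqP/val_inj.
  exact: (block_meet_uniq nn_incr ile jle ij ti (X_supp_block jell Xw wt)).
exists v0, (v c / v0 c); split=> // t ti.
have [->|tc] := eqVneq t c; first by rewrite mulfVK.
by rewrite !(only_c _ t) ?mulr0.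
Qed.

Lemma block_ideal_sub i f : (1 <= i <= ell)%N -> block_ideal i f -> chain_ideal f.
Proof.
move=> iell [fB fX] j jell v Xv.
case: (eqVneq i j) Xv => [<-|ij Xv]; first exact: fX.
have [u [c [Xu vE]]] := restrict_block_multiple iell jell ij Xv.
rewrite (meval_subring fB vE).
exact: (vanishing_ideal_scale k_char0 c (X_closed iell) Xu fX).
Qed.

Variables (le : rel 'X_{1..n.+1}) (r : 'I_n.+1 -> int).

Lemma initial_block_sub i a : (1 <= i <= ell)%N ->
  in_initial le r (block_ideal i) a -> in_initial le r chain_ideal a.
Proof. by move=> iell [f [b [/(block_ideal_sub iell) fX f0 fb ba]]]; exists f, b. Qed.

(* The block-supported part of an element of I_X agrees with it on X_i, and it
   keeps the leading monomial, which divides the block-supported monomial a. *)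
Lemma initial_chain_block i a : (1 <= i <= ell)%N -> supported (block nn i) a ->
  in_initial le r chain_ideal a -> in_initial le r (block_ideal i) a.
Proof.
move=> iell aB [f [b [fX f0 [bf b_lead] ba]]].
pose s := [seq c <- msupp f | supported (block nn i) c].
pose g : {mpoly k[n.+1]} := \sum_(c <- s) f@_c *: 'X_[c].
have g_supp c : (c \in msupp g) = supported (block nn i) c && (c \in msupp f).
  rewrite (perm_mem (msupp_sumX _ _)) ?mem_filter ?filter_uniq ?msupp_uniq //.
  by move=> c'; rewrite mem_filter -mcoeff_msupp => /andP [].
have bB : supported (block nn i) b.
  apply/forallP => t; apply/implyP => bt0; move/forallP/(_ t)/implyP: aB; apply.
  by move/forallP/(_ t): ba; apply: contraTneq => ->; rewrite leqn0.
have bg : b \in msupp g by rewrite g_supp bB bf.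
exists g, b; split=> //.
- split; first by apply/allP => c; rewrite g_supp => /andP [].
  move=> v Xv; rewrite -(fX i iell v Xv) raddf_sum /= mevalE big_filter big_mkcond /=.
  apply: eq_bigr => c _; rewrite mevalZ mevalX; case: ifP => // /negbT cB.
  by rewrite (prodX_unsupported_eq0 (X_zero_off_block iell Xv) cB) mulr0.
- by apply: contraTneq bg => ->; rewrite msupp0.
- by split=> // c; rewrite g_supp => /andP [_ /b_lead].
Qed.

Lemma initial_chain_mixed a : reflexive le ->
  (forall i, (1 <= i <= ell)%N -> ~~ supported (block nn i) a) ->
  in_initial le r chain_ideal a.
Proof.
move=> le_refl a_mixed; exists 'X_[a], a; split.
- move=> i iell v Xv; rewrite mevalX.
  exact: prodX_unsupported_eq0 (X_zero_off_block iell Xv) (a_mixed i iell).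
- by rewrite -(msupp_eq0 (R := k)) msuppX.
- split; first by rewrite msuppX mem_head.
  by move=> c; rewrite msuppX inE => /eqP ->; rewrite /wle eqxx le_refl orbT.
- by apply/forallP => t.
Qed.

Lemma chain_meet_coordinate i : (1 <= i)%N -> (i < ell)%N ->
  exists2 v, X i v & forall t : 'I_n.+1, val t != nn i -> v t = 0.
Proof.
move=> i1 iell.
have iell' : (1 <= i <= ell)%N by rewrite i1 ltnW.
have i1ell : (1 <= i.+1 <= ell)%N by [].
have ii1 : i != i.+1 by rewrite neq_ltn ltnSn.
have [v [Xiv Xi1v]] : exists v, X i v /\ X i.+1 v.
  by apply/(X_chain iell' i1ell ii1); rewrite eqxx orbT.
exists v => // t; apply: contraNeq => vt; apply/eqP.
exact: (block_meet_lt nn_incr (ltnSn i) iell (X_supp_block iell' Xiv vt)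
  (X_supp_block i1ell Xi1v vt)).2.
Qed.

(* X_i \cap X_{i+1} is the coordinate point of x_{n_i}, so no element of I_X has
   a pure power of x_{n_i} in its support, and a divisor of x_{n_i}^d is one. *)
Lemma breakpoint_power_std i (c : 'I_n.+1) d : (1 <= i)%N -> (i < ell)%N ->
  val c = nn i -> ~ in_initial le r chain_ideal (U_(c) *+ d).
Proof.
move=> i1 iell ci [f [b [fX f0 [bf _] bd]]].
have iell' : (1 <= i <= ell)%N by rewrite i1 ltnW.
have [v Xv v_supp] := chain_meet_coordinate i1 iell.
have bE : b = (U_(c) *+ mdeg b)%MM.
  apply/supported_pred1_power/forallP => t; apply/implyP; apply: contraR => /= /negbTE tc.
  by move/forallP/(_ t): bd; rewrite mulmnE mnm1E eq_sym tc leqn0 => /eqP ->.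
move: bf; rewrite mcoeff_msupp bE.
rewrite (mcoeff_coordinate_power_eq0 k_char0 _ (X_closed iell') Xv) ?eqxx //.
  by move=> t tc; apply: v_supp; rewrite -ci (inj_eq val_inj).
exact: fX.
Qed.

End Chain.

Section BreakpointPowers.
Variables (n ell : nat) (nn : nat -> nat) (m : nat).
Hypothesis nn_incr : forall i, (i < ell)%N -> (nn i < nn i.+1)%N.
Hypothesis nn_ell : nn ell = n.
Hypothesis m_gt0 : (0 < m)%N.

Definition breakpoint_power i : 'X_{1..n.+1} := (U_(inord (nn i)) *+ m)%MM.
Local Notation E := breakpoint_power.

Lemma nn_ltn_ord i : (i <= ell)%N -> (nn i < n.+1)%N.
Proof. by move=> iell; rewrite ltnS -nn_ell (leq_nn nn_incr). Qed.

Lemma breakpoint_powerE i t : (i <= ell)%N ->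
  E i t = if (t == nn i :> nat) then m else 0%N.
Proof.
move=> iell; rewrite mulmnE mnm1E -(inj_eq val_inj) /= inordK ?nn_ltn_ord //.
by rewrite eq_sym; case: eqP; rewrite ?mul1n.
Qed.

Lemma mdeg_breakpoint_power i : mdeg (E i) = m.
Proof. by rewrite mdegMn mdeg1 mul1n. Qed.

Lemma breakpoint_power_inj i j : (i <= ell)%N -> (j <= ell)%N ->
  (E i == E j) = (i == j).
Proof.
move=> iell jell; apply/eqP/eqP => [Eij|-> //].
have := congr1 (fun a : 'X_{1..n.+1} => a (inord (nn i))) Eij.
rewrite !breakpoint_powerE // inordK ?nn_ltn_ord // eqxx.
case: eqP => [nnij _|_ m0]; last by move: m_gt0; rewrite m0.
by apply/eqP; rewrite eqn_leq -(leq_nn nn_incr iell jell) -(leq_nn nn_incr jell iell) nnij leqnn.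
Qed.

Lemma supported_breakpoint_power i j : (1 <= i <= ell)%N -> (j <= ell)%N ->
  supported (block nn i) (E j) = (i == j) || (i == j.+1).
Proof.
move=> /andP [i1 iell] jell.
have -> : supported (block nn i) (E j) = (nn i.-1 <= nn j <= nn i)%N.
  apply/forallP/idP => [jB|jB t].
    move: (jB (inord (nn j))); rewrite breakpoint_powerE // inordK ?nn_ltn_ord //.
    by rewrite /block /= inordK ?nn_ltn_ord // eqxx -lt0n m_gt0.
  rewrite breakpoint_powerE //; case: ifP => [/eqP tE|_] //.
  by rewrite /block /= tE jB implybT.
have i1ell : (i.-1 <= ell)%N := leq_trans (leq_pred i) iell.
rewrite !(leq_nn nn_incr) //; lia.
Qed.

Lemma two_blocks_breakpoint_power (a : 'X_{1..n.+1}) i j :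
  mdeg a = m -> (i < j)%N -> (j <= ell)%N ->
  supported (block nn i) a -> supported (block nn j) a -> j = i.+1 /\ a = E i.
Proof.
move=> mdeg_a ij jell /forallP aBi /forallP aBj.
have a_meet t : a t != 0%N -> j = i.+1 /\ (t : nat) = nn i.
  by move=> at0; apply: (block_meet_lt nn_incr ij jell (implyP (aBi t) at0) (implyP (aBj t) at0)).
have [t at0] : exists t, a t != 0%N.
  apply/existsP; apply: contraTT m_gt0 => /existsPn a0.
  by rewrite -mdeg_a mdegE big1 // => t _; apply/eqP/negPn/a0.
split; first by have [] := a_meet t at0.
suff /supported_pred1_power -> : supported (pred1 (inord (nn i))) a by rewrite mdeg_a.
apply/forallP => t'; apply/implyP => /a_meet [_ t'E] /=.
by apply/eqP/ord_inj; rewrite t'E inordK // nn_ltn_ord // (leq_trans (ltnW ij)).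
Qed.

Lemma count_supporting_blocks a i0 : mdeg a = m -> (1 <= i0 <= ell)%N ->
  supported (block nn i0) a ->
  count (fun i => supported (block nn i) a) (iota 1 ell) =
  (1 + count (fun i => a == E i) (iota 1 ell.-1))%N.
Proof.
move=> mdeg_a /andP [i01 i0ell] aB.
have iota_ell i : (i \in iota 1 ell) = (1 <= i <= ell)%N by rewrite mem_iota add1n ltnS.
have iota_ell1 i : (i \in iota 1 ell.-1) = (1 <= i < ell)%N.
  by rewrite mem_iota add1n prednK // (leq_trans i01).
have [[i1 /andP [i11 i1ell] ->]|not_power] :
    (exists2 i1, (1 <= i1 < ell)%N & a = E i1) \/ (forall i, (1 <= i < ell)%N -> a != E i).
  case: (boolP (has (fun i => a == E i) (iota 1 ell.-1))) => [/hasP [i1]|/hasPn not_power].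
    by rewrite iota_ell1 => ? /eqP; left; exists i1.
  by right => i; rewrite -iota_ell1 => /not_power.
- have -> : count (fun i => E i1 == E i) (iota 1 ell.-1) = 1%N.
    rewrite (@eq_in_count _ _ (pred1 i1)) => [|i]; last first.
      rewrite iota_ell1 => /andP [_ iell] /=.
      by rewrite breakpoint_power_inj ?(ltnW iell) ?(ltnW i1ell) // eq_sym.
    by rewrite count_uniq_mem ?iota_uniq // iota_ell1 i11 i1ell.
  rewrite (@eq_in_count _ _ (predU (pred1 i1) (pred1 i1.+1))); last first.
    by move=> i; rewrite iota_ell => iell; rewrite supported_breakpoint_power ?(ltnW i1ell).
  have c1 : count (pred1 i1) (iota 1 ell) = 1%N.
    by rewrite count_uniq_mem ?iota_uniq // iota_ell i11 (ltnW i1ell).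
  have c2 : count (pred1 i1.+1) (iota 1 ell) = 1%N.
    by rewrite count_uniq_mem ?iota_uniq // iota_ell i1ell.
  have c12 : count (predI (pred1 i1) (pred1 i1.+1)) (iota 1 ell) = 0%N.
    rewrite (@eq_count _ _ pred0) ?count_pred0 // => i /=.
    by case: eqP => // ->; rewrite eqn_leq ltnn andbF.
  by have := count_predUI (pred1 i1) (pred1 i1.+1) (iota 1 ell); rewrite c1 c2 c12 addn0.
- rewrite [in RHS](@eq_in_count _ _ pred0) ?count_pred0; last first.
    by move=> i; rewrite iota_ell1 => /not_power /negbTE.
  rewrite (@eq_in_count _ _ (pred1 i0)) ?count_uniq_mem ?iota_uniq ?iota_ell ?i01 ?i0ell //.
  move=> i; rewrite iota_ell => /andP [i1 iell] /=; apply/idP/eqP => [iB|-> //].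
  case: (ltngtP i i0) => [ii0|i0i|//].
    have [_ aE] := two_blocks_breakpoint_power mdeg_a ii0 i0ell iB aB.
    by move: (not_power i); rewrite aE eqxx i1 (leq_trans ii0 i0ell) => /(_ isT).
  have [_ aE] := two_blocks_breakpoint_power mdeg_a i0i iell aB iB.
  by move: (not_power i0); rewrite aE eqxx i01 (leq_trans i0i iell) => /(_ isT).
Qed.

End BreakpointPowers.

Definition std_monomial (k : fieldType) (N : nat) (le : rel 'X_{1..N})
    (r : 'I_N -> int) (B : pred 'I_N) (J : {mpoly k[N]} -> Prop) (m : nat)
    (a : 'X_{1..N < m.+1}) : bool :=
  [&& mdeg a == m, supported B a & ~~ bP (in_initial le r J a)].
Arguments std_monomial {k N} le r B J m a.

Section StandardMonomials.
Variables (k : fieldType) (n ell : nat) (nn : nat -> nat).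
Variable X : nat -> ('I_n.+1 -> k) -> Prop.
Hypothesis k_char0 : [pchar k] =i pred0.
Hypothesis nn_incr : forall i, (i < ell)%N -> (nn i < nn i.+1)%N.
Hypothesis nn_ell : nn ell = n.
Hypothesis X_closed : forall i, (1 <= i <= ell)%N -> proj_closed (X i).
Hypothesis X_nonempty : forall i, (1 <= i <= ell)%N -> exists v, X i v.
Hypothesis X_supp : forall i, (1 <= i <= ell)%N -> forall v, X i v ->
  forall j : 'I_n.+1, (j < nn i.-1)%N || (nn i < j)%N -> v j = 0.
Hypothesis X_chain : forall i j, (1 <= i <= ell)%N -> (1 <= j <= ell)%N -> i != j ->
  ((exists v, X i v /\ X j v) <-> (i == j.+1) || (j == i.+1)).
Variables (le : rel 'X_{1..n.+1}) (r : 'I_n.+1 -> int) (m : nat).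
Hypothesis le_refl : reflexive le.
Hypothesis m_gt0 : (0 < m)%N.

Local Notation E := (breakpoint_power n nn m).
Local Notation std_chain := (std_monomial le r predT (chain_ideal ell X) m).
Local Notation std_block i := (std_monomial le r (block nn i) (block_ideal nn X i) m).

Lemma count_std_block (a : 'X_{1..n.+1 < m.+1}) :
  count (fun i => std_block i a) (iota 1 ell) =
  (std_chain a + count (fun i => val a == E i) (iota 1 ell.-1))%N.
Proof.
have count0 (P : pred nat) s : {in s, forall i, ~~ P i} -> count P s = 0%N.
  by move=> P0; apply/eqP; rewrite -leqn0 leqNgt -has_count; apply/hasPn.
have iota_ell i : (i \in iota 1 ell) = (1 <= i <= ell)%N by rewrite mem_iota add1n ltnS.
have iota_ell1 i : i \in iota 1 ell.-1 -> (1 <= i < ell)%N.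
  by rewrite mem_iota; lia.
rewrite /std_monomial; have [mdeg_a|] /= := eqVneq (mdeg a) m; last first.
  move=> mdeg_a; rewrite !count0 // => i _; apply: contra mdeg_a => /eqP ->.
  by rewrite mdeg_breakpoint_power.
have [a_init|a_std] := bPP (in_initial le r (chain_ideal ell X) a).
  rewrite andbF !count0 // => [i /iota_ell1 /andP [i1 iell]|i].
    apply/eqP => aE; move: a_init; rewrite aE.
    apply: (breakpoint_power_std k_char0 nn_incr X_closed X_supp X_chain i1 iell).
    exact: inordK (nn_ltn_ord nn_incr nn_ell (ltnW iell)).
  rewrite iota_ell => iell; apply/negP => /andP [aB /bPP[]].
  exact: (initial_chain_block X_supp iell aB a_init).
rewrite (@eq_in_count _ _ (fun i => supported (block nn i) a)) => [|i]; last first.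
  rewrite iota_ell => iell /=.
  suff -> : bP (in_initial le r (block_ideal nn X i) a) = false by rewrite andbT.
  apply: (introF (bPP _)) => /(initial_block_sub k_char0 nn_incr X_closed X_nonempty).
  by move=> /(_ X_supp X_chain iell).
have -> /= : supported predT a by apply/forallP => t; apply/implyP.
have [/hasP [i0]|/hasPn none] := boolP (has (fun i => supported (block nn i) a) (iota 1 ell)).
  rewrite iota_ell => i0ell aB.
  exact: (count_supporting_blocks nn_incr nn_ell m_gt0 mdeg_a i0ell aB).
case: a_std; apply: (initial_chain_mixed X_supp r le_refl) => i iell.
by apply: none; rewrite iota_ell.
Qed.

Lemma mdeg_breakpoint_power_lt i : (mdeg (E i) < m.+1)%N.
Proof. by rewrite mdeg_breakpoint_power. Qed.

Lemma wt_breakpoint_power i : (i <= ell)%N ->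
  wt r (E i) = (m%:Z * r (inord (nn i)))%R.
Proof.
have nn_ord := nn_ltn_ord nn_incr nn_ell.
have EE := breakpoint_powerE m nn_incr nn_ell.
move=> iell; rewrite /wt (bigD1 (inord (nn i))) //= big1 ?addr0.
  by rewrite EE // inordK ?nn_ord // eqxx.
move=> t ti; rewrite EE //; case: eqP => [tE|_]; last by rewrite mul0r.
by move: ti; rewrite -(inj_eq (@ord_inj _)) inordK ?nn_ord // tE eqxx.
Qed.

Lemma sum_std_block_weights :
  \sum_(1 <= i < ell.+1) \sum_(a | std_block i a) ((wt r a)%:~R : rat) =
  \sum_(a | std_chain a) (wt r a)%:~R +
  m%:R * \sum_(1 <= i < ell) ((r (inord (nn i)))%:~R : rat).
Proof.
set w := fun a : 'X_{1..n.+1 < m.+1} => ((wt r a)%:~R : rat).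
rewrite /index_iota subSS subn0 subn1 (exchange_big_dep xpredT) //=.
under eq_bigr do rewrite sumr_const_seq count_std_block mulrnDr.
rewrite big_split /=; congr (_ + _).
  by rewrite [RHS]big_mkcond; apply: eq_bigr => a _; case: std_monomial.
under eq_bigr do rewrite -sumr_const_seq.
rewrite (exchange_big_dep xpredT) //= mulr_sumr; apply: eq_big_seq => i.
rewrite mem_iota add1n => /andP [_ iell].
have iell' : (i <= ell)%N by move: iell; case: (ell) => //= l /ltnW.
rewrite (big_pred1 (BMultinom (mdeg_breakpoint_power_lt i))) => [|a] /=.
  by rewrite /w wt_breakpoint_power // intrM.
by rewrite -val_eqE.
Qed.

End StandardMonomials.

Lemma card_ord_interval (n a b : nat) : (a <= b <= n)%N ->
  #|(fun j : 'I_n.+1 => (a <= j <= b)%N)| = (b - a + 1)%N.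
Proof.
move=> /andP [ab bn]; rewrite -sum1_card (eq_bigl (fun j : 'I_n.+1 => (a <= j <= b)%N)) //.
rewrite -(big_mkord (fun j => (a <= j <= b)%N) (fun _ => 1%N)) sum1_count /index_iota subn0.
have -> : n.+1 = (a + ((b - a + 1) + (n - b)))%N by lia.
rewrite iotaD count_cat iotaD count_cat add0n.
rewrite (@eq_in_count _ _ pred0) ?count_pred0; last by move=> j; rewrite mem_iota /=; lia.
rewrite [X in (_ + (_ + X))%N](@eq_in_count _ _ pred0) ?count_pred0; last first.
  by move=> j; rewrite mem_iota /=; lia.
rewrite (@eq_in_count _ _ predT) ?count_predT ?size_iota ?addn0 //.
by move=> j; rewrite mem_iota /=; lia.
Qed.

Lemma card_block n ell (nn : nat -> nat) i :
  (forall i, (i < ell)%N -> (nn i < nn i.+1)%N) -> nn ell = n ->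
  (1 <= i <= ell)%N -> #|@block n nn i| = (nn i - nn i.-1 + 1)%N.
Proof.
move=> nn_incr nn_ell /andP [_ iell]; rewrite card_ord_interval // -nn_ell.
by rewrite !(leq_nn nn_incr) ?leq_pred ?(leq_trans (leq_pred i) iell).
Qed.

Theorem proposition1p6
  (k : closedFieldType) (hchar : [pchar k] =i pred0)
  (n ell : nat) (nn : nat -> nat)
  (X : nat -> ('I_n.+1 -> k) -> Prop)
  (le : rel 'X_{1..n.+1}) (r : 'I_n.+1 -> int)
  (P : {poly rat}) (Ps : nat -> {poly rat}) (m : nat) :
  (0 < ell)%N ->
  nn 0%N = 0%N -> nn ell = n ->
  (forall i, (i < ell)%N -> (nn i < nn i.+1)%N) ->
  (forall i, (1 <= i <= ell)%N -> proj_variety (X i)) ->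
  (forall i, (1 <= i <= ell)%N -> forall v, X i v ->
     forall j : 'I_n.+1, (j < nn i.-1)%N || (nn i < j)%N -> v j = 0) ->
  (forall i j, (1 <= i <= ell)%N -> (1 <= j <= ell)%N -> i != j ->
     ((exists v, X i v /\ X j v) <-> (i == j.+1) || (j == i.+1))) ->
  monomial_order le ->
  let IX := fun f : {mpoly k[n.+1]} =>
    forall i, (1 <= i <= ell)%N -> vanishing_ideal (X i) f in
  let J := fun (i : nat) (f : {mpoly k[n.+1]}) =>
    in_subring (block nn i) f /\ vanishing_ideal (X i) f in
  is_hilb_poly predT IX P ->
  (forall i, (1 <= i <= ell)%N -> is_hilb_poly (block nn i) (J i) (Ps i)) ->
  (0 < m)%N ->
  (forall d, (m <= d)%N -> exists c, hilb_fun predT IX d c /\ P.[d%:R] = c%:R) ->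
  (forall i, (1 <= i <= ell)%N -> forall d, (m <= d)%N ->
     exists c, hilb_fun (block nn i) (J i) d c /\ (Ps i).[d%:R] = c%:R) ->
  hm_index le r predT IX P m =
    \sum_(1 <= i < ell.+1) hm_index le r (block nn i) (J i) (Ps i) m
    - \sum_(1 <= i < ell.+1)
        (m%:R * (Ps i).[m%:R] / (nn i - nn i.-1 + 1)%:R
         * \sum_(j < n.+1 | (nn i.-1 <= j <= nn i)%N) (r j)%:~R)
    + m%:R * P.[m%:R] / (n + 1)%:R * \sum_(j < n.+1) (r j)%:~R
    + m%:R * \sum_(1 <= i < ell) (r (inord (nn i)))%:~R.
Proof.
move=> _ _ nn_ell nn_incr X_var X_supp X_chain le_order IX J _ _ m_gt0 _ _.
have X_closed i (iell : (1 <= i <= ell)%N) : proj_closed (X i) by case: (X_var i iell).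
have X_nonempty i (iell : (1 <= i <= ell)%N) : exists v, X i v by case: (X_var i iell).
have le_refl : reflexive le by case: le_order => [[]].
have := sum_std_block_weights hchar nn_incr nn_ell X_closed X_nonempty X_supp X_chain
  r le_refl m_gt0.
rewrite /std_monomial => std_sum.
rewrite /hm_index big_split /= sumrN std_sum.
have -> : #|(predT : pred 'I_n.+1)| = (n + 1)%N by rewrite card_ord addn1.
under eq_big_nat => i i_range do rewrite (card_block nn_incr nn_ell i_range).
rewrite /block; ring.
Qed.
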